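(* Let $g$ be a polynomial of degree at least one, let $A\subset\mathbb{C}$ be compact, and let $B\subset PH(A)$ satisfy $g(B)\subset B$. Then $B\subset PH(g^{-1}(A))$. In particular, if $g\in G\in\mathcal{G}$ and $P^*(G)\subset PH(A)$ where $A\subset\mathbb{C}$ is compact, then $P^*(G)\subset PH(g^{-1}(A))$.
   Context: For compact $A\subset\mathbb{C}$, the polynomial hull $PH(A)$ is the union of $A$ and all bounded components of $\mathbb{C}\setminus A$. A polynomial semigroup is a semigroup of non-constant complex polynomials (self-maps of $\hat{\mathbb{C}}$) under composition. $P(G)$ is the closure in $\hat{\mathbb{C}}$ of the set of all critical values of all $g\in G$, and $P^*(G)=P(G)\setminus\{\infty\}$. $\mathcal{G}$: polynomial semigroups all of whose elements have degree $\ge2$ and with $P^*(G)$ bounded in $\mathbb{C}$. *)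

(* The complex plane is R[i] for an
   arbitrary R : realType, viewed as a numClosedFieldType so that it carries
   the (norm = modulus) topology of MathComp-Analysis. *)
From HB Require Import structures.
From mathcomp Require Import all_boot all_order all_algebra complex.
From mathcomp Require Import all_classical all_reals all_analysis.
Import numFieldTopology.Exports numFieldNormedType.Exports.
Import Order.TTheory GRing.Theory Num.Theory.

Set Implicit Arguments.
Unset Strict Implicit.
Unset Printing Implicit Defensive.

Local Open Scope classical_set_scope.
Local Open Scope ring_scope.

Definition Cplx (R : realType) : numClosedFieldType := R[i].

Definition PH (R : realType) (A : set (Cplx R)) : set (Cplx R) :=
  A `|` [set z | exists w, ~ A w /\
           bounded_set (connected_component (~` A) w) /\
           connected_component (~` A) w z].

Definition poly_semigroup (R : realType) (G : set {poly Cplx R}) : Prop :=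
  (forall g, G g -> (1 < size g)%N) /\
  (forall g h, G g -> G h -> G (g \Po h)).

Definition crit_values (R : realType) (G : set {poly Cplx R}) : set (Cplx R) :=
  [set w | exists g z, G g /\ (g^`()).[z] = 0 /\ w = g.[z]].

(* P^*(G) = P(G) \ {oo}: the closure in C of the finite critical values. *)
Definition Pstar (R : realType) (G : set {poly Cplx R}) : set (Cplx R) :=
  closure (crit_values G).

(* The class \mathcal{G}: polynomial semigroups all of whose elements have
   degree >= 2 (size >= 3) and with P^*(G) bounded. *)
Definition in_class_G (R : realType) (G : set {poly Cplx R}) : Prop :=
  [/\ poly_semigroup G, (forall g, G g -> (2 < size g)%N) &
      bounded_set (Pstar G)].

(* If z lies in B but g(z) is not in A, then g(z) lies in B, hence in a bounded
   component U of C \ A.  By continuity the component V of z in C \ g^-1(A) is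
   mapped by g into U, and a non-constant polynomial tends to infinity, so V is
   bounded: z lies in PH(g^-1(A)).  For the second assertion it suffices that
   P^*(G) is forward invariant under g in G: a critical value h(z) of h in G is
   a critical value g(h(z)) of g \Po h in G by the chain rule, and g is
   continuous, so g maps the closure of the critical values into itself. *)
From HB Require Import structures.
From mathcomp Require Import all_boot all_order all_algebra complex.
From mathcomp Require Import all_classical all_reals all_analysis.
Import numFieldTopology.Exports numFieldNormedType.Exports.
Import Order.TTheory GRing.Theory Num.Theory.

Set Implicit Arguments.
Unset Strict Implicit.
Local Open Scope classical_set_scope.
Local Open Scope ring_scope.

Lemma continuous_image_closure (T U : topologicalType) (S : set T)
    (f : T -> U) :
  continuous f -> f @` closure S `<=` closure (f @` S).
Proof.
move=> cf _ [p Sp <-] B /cf fB.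
have [q [Sq Bq]] := Sp _ fB.
by exists (f q); split => //; exists q.
Qed.

Lemma continuous_image_connected_component (T U : topologicalType)
    (f : T -> U) (A : set U) (z : T) :
  continuous f -> ~ A (f z) ->
  f @` connected_component (~` (f @^-1` A)) z `<=`
    connected_component (~` A) (f z).
Proof.
move=> cf nAfz; apply: connected_component_max.
- by exists z => //; exact: connected_component_refl.
- by move=> _ [u /connected_component_sub Au <-].
- apply: connected_continuous_connected; first exact: component_connected.
  exact: continuous_subspaceT.
Qed.

Lemma bounded_setS (K : numFieldType) (U V : set K) :
  U `<=` V -> bounded_set V -> bounded_set U.
Proof. by move=> UV; apply: sub_boundedr => P VP x /UV; exact: VP. Qed.

Section horner_num.
Variables (K : numFieldType) (p : {poly K}).

Lemma horner_continuous : continuous (horner p).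
Proof.
elim/poly_ind: p => [|q c ihq].
  have -> : horner 0 = cst (0 : K) by apply/funext => z; rewrite horner0.
  exact: cst_continuous.
have -> : horner (q * 'X + c%:P) = horner q \* id + cst c.
  by apply/funext => z; rewrite !hornerE.
move=> x; apply: continuousD; last exact: cst_continuous.
by apply: continuousM; [exact: ihq | exact: cvg_id].
Qed.

Hypothesis size_p : (1 < size p)%N.

Let n := (size p).-1.
Let S := \sum_(i < n) `|p`_i|.

Lemma norm_horner_ge (z : K) :
  1 <= `|z| -> `|lead_coef p| * `|z| - S <= `|p.[z]|.
Proof.
move=> z_ge1.
have size_pE : size p = n.+1 by rewrite /n; case: (size p) size_p.
have nE : n = n.-1.+1 by rewrite /n; case: (size p) size_p => // -[|k].
(* Split off the leading term and use the reverse triangle inequality. *)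
have lower : `|z| ^+ n.-1 * (`|lead_coef p| * `|z| - S) <= `|p.[z]|.
  rewrite horner_coef size_pE big_ord_recr /= addrC -lead_coefE.
  apply: le_trans (lerB_normD _ _).
  rewrite mulrBr normrM normrX; apply: lerB.
    by rewrite mulrCA -exprSr -nE mulrC.
  apply: le_trans (ler_norm_sum _ _ _) _.
  rewrite /S mulr_sumr; apply: ler_sum => i _.
  rewrite normrM normrX mulrC; apply: ler_wpM2r => //.
  by apply: ler_weXn2l => //; have := ltn_ord i; rewrite {2}nE ltnS.
have [lin_ge0|lin_lt0] := boolP (0 <= `|lead_coef p| * `|z| - S).
  apply: le_trans lower; rewrite -[leLHS]mul1r; apply: ler_wpM2r => //.
  exact: exprn_ege1.
have lin_real : `|lead_coef p| * `|z| - S \is Num.real.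
  by apply: realB; [apply: realM | apply: ger0_real; apply: sumr_ge0].
by apply: le_trans (normr_ge0 _); apply: ltW; rewrite real_ltNge ?real0.
Qed.

Lemma bounded_horner_preimage (U : set K) :
  bounded_set (horner p @` U) -> bounded_set U.
Proof.
move=> /pinfty_ex_gt0 [M M_gt0 pU_le].
have S_ge0 : 0 <= S by apply: sumr_ge0.
have lc_gt0 : 0 < `|lead_coef p|.
  by rewrite normr_gt0 lead_coef_eq0 -size_poly_eq0; case: (size p) size_p.
have bound_ge0 : 0 <= (M + S) / `|lead_coef p|.
  by apply: divr_ge0; [apply: addr_ge0; first exact: ltW | exact: ltW].
have bound_real : 1 + (M + S) / `|lead_coef p| \is Num.real.
  by apply: ger0_real; rewrite addr_ge0.
apply: filterS (nbhs_pinfty_ge bound_real) => N bound_le u Uu /=.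
apply: le_trans bound_le.
have [u_le1|u_gt1] := boolP (`|u| <= 1).
  by rewrite (le_trans u_le1) ?lerDl.
have u_ge1 : 1 <= `|u| by apply: ltW; rewrite real_ltNge ?real1 ?normr_real.
have pu_le : `|p.[u]| <= M by apply: pU_le; exists u.
have : `|lead_coef p| * `|u| - S <= M.
  exact: le_trans (norm_horner_ge u_ge1) pu_le.
rewrite lerBlDr -ler_pdivlMl // => u_le.
by apply: le_trans u_le _; rewrite mulrC lerDr.
Qed.

End horner_num.

Lemma sub_PH_horner_preimage (R : realType) (g : {poly Cplx R})
    (A B : set (Cplx R)) :
  (1 < size g)%N -> B `<=` PH A -> horner g @` B `<=` B ->
  B `<=` PH (horner g @^-1` A).
Proof.
move=> size_g B_PH gB z Bz.
have [Agz|nAgz] := pselect (A g.[z]); first by left.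
right; exists z; split => //; split; last exact: connected_component_refl.
have gz_B : B g.[z] by apply: gB; exists z.
have [//|[w [_ [bounded_w w_gz]]]] := B_PH _ gz_B.
apply: (bounded_horner_preimage size_g).
apply: bounded_setS bounded_w; rewrite (same_connected_component w_gz).
exact/continuous_image_connected_component/nAgz/horner_continuous.
Qed.

Lemma crit_values_horner_image (R : realType) (G : set {poly Cplx R})
    (g : {poly Cplx R}) :
  poly_semigroup G -> G g -> horner g @` crit_values G `<=` crit_values G.
Proof.
move=> [_ G_comp] Gg _ [_ [h [z [Gh [h'z ->]]]] <-].
exists (g \Po h), z; split; first exact: G_comp.
by rewrite deriv_comp hornerM h'z mulr0 horner_comp.
Qed.

Lemma Pstar_horner_image (R : realType) (G : set {poly Cplx R})
    (g : {poly Cplx R}) :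
  poly_semigroup G -> G g -> horner g @` Pstar G `<=` Pstar G.
Proof.
move=> semi_G Gg.
have g_closure :=
  continuous_image_closure (S := crit_values G) (@horner_continuous _ g).
apply: subset_trans g_closure _.
exact/closureS/crit_values_horner_image.
Qed.

Theorem lemma2p5 (R : realType) :
  (forall (g : {poly Cplx R}) (A B : set (Cplx R)),
      (1 < size g)%N -> compact A -> B `<=` PH A ->
      (fun z => g.[z]) @` B `<=` B ->
      B `<=` PH ((fun z => g.[z]) @^-1` A))
  /\
  (forall (G : set {poly Cplx R}) (g : {poly Cplx R}) (A : set (Cplx R)),
      in_class_G G -> G g -> compact A -> Pstar G `<=` PH A ->
      Pstar G `<=` PH ((fun z => g.[z]) @^-1` A)).
Proof.
split=> [g A B size_g _|G g A [semi_G _ _] Gg _ Pstar_PH].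
  exact: sub_PH_horner_preimage.
apply: sub_PH_horner_preimage Pstar_PH (Pstar_horner_image semi_G Gg).
exact: semi_G.1.
Qed.
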